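(* Let $L$ be a multisorted algebra in the positive existential signature satisfying axioms (1), (2), (3), (7), (8), (9), (10). Let $M_1$ be a model of the almost morphic conditions of $L$. Then there is a model $M_2\supseteq M_1$ of the almost morphic conditions of $L$ which has witnesses over $M_1$.
   Context: The Boolean prime ideal theorem (equivalently, compactness) is assumed. Signature. There is a sort $n$ for each $n\ge0$. For every function $\alpha\colon\{1,\dots,n\}\to\{1,\dots,k\}$ there is a unary function symbol (''substitution'') $\alpha\colon n\to k$ (argument of sort $n$, value of sort $k$). Each sort has $0,1,\vee,\wedge$; for each $n$ there is $\exists\colon n+1\to n$ (positive existential signature). For $\alpha\colon k\to n$, $\beta\colon n\to m$, $\beta\circ\alpha$ is the substitution symbol of the composite function. $\alpha^{\mathrm{tuple}}(x_1,\dots,x_k)=(x_{\alpha(1)},\dots,x_{\alpha(n)})$. The associated cylindrification of $\exists\colon n+1\to n$ is $c\colon n\to n+1$, $c(i)=i$; $\exists^{(n)}$ is $n$-fold projection. $x\le y$ means $x=x\wedge y$. Axioms: (1) each sort is a bounded distributive lattice; (2) substitutions preserve $0,1,\vee,\wedge$; (3) $(\beta\circ\alpha)(r)=\beta(\alpha(r))$; (7) $\exists(0)=0$, $\exists(r\vee s)=\exists(r)\vee\exists(s)$; (8) $r\le c(\exists(r))$; (9) $\exists(r\wedge c(s))=\exists(r)\wedge s$; (10) for substitutions $\alpha_i\colon k_i\to m$ ($i=1,\dots,n$) and $\beta_i\colon k_i+1\to m+n$ with $\beta_i(j)=\alpha_i(j)$ for $j\le k_i$, $\beta_i(k_i+1)=m+i$: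 $\exists^{(n)}(\bigwedge_i\beta_i(r_i))=\bigwedge_i\alpha_i(\exists(r_i))$ for all $r_i$ of sort $k_i+1$. Almost morphic conditions. Consider the first order relational language with an $n$-ary relation symbol (also written $r$) for each element $r$ of sort $n$ of $L$. The almost morphic conditions of $L$ are the sentences: $\forall\bar x\,\neg 0(\bar x)$; $\forall\bar x\, 1(\bar x)$; $\forall\bar x\,((r\vee s)(\bar x)\leftrightarrow r(\bar x)\lor s(\bar x))$; $\forall\bar x\,((r\wedge s)(\bar x)\leftrightarrow r(\bar x)\land s(\bar x))$; $\forall\bar x\,((\alpha(r))(\bar x)\leftrightarrow r(\alpha^{\mathrm{tuple}}(\bar x)))$ for every substitution $\alpha$ and $r$ of matching sort; and $\forall\bar x\,\forall y\,(r(\bar xy)\to(\exists(r))(\bar x))$ (all for elements of appropriate sorts). For a model $M$ and an $n$-tuple $\bar a$ from $M$, ${\mathfrak p}(\bar a)=\{r \text{ of sort } n: M\models r(\bar a)\}$, which is a prime filter on sort $n$. For a prime filter $G$ on sort $n+1$, $c^{-1}(G)=\{u \text{ of sort } n: c(u)\in G\}$. Witnesses: if $M_1\subseteq M_2$ (substructure) are models of the almost morphic conditions, $M_2$ has witnesses over $M_1$ if for every tuple $\bar a=(a_1,\dots,a_n)$ from $M_1$ and every prime filter $G$ on sort $n+1$ of $L$ with $c^{-1}(G)={\mathfrak p}(\bar a)$, there is $b\in M_2$ with $M_2\models r(\bar a b)$ for every $r\in G$. A prime filter is a proper, nonempty, upward-closed, $\wedge$-closed subset of a sort with $x\vee y\in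 F\Rightarrow x\in F$ or $y\in F$. *)

From mathcomp Require Import all_boot.
Set Implicit Arguments. Unset Strict Implicit. Unset Printing Implicit Defensive.

(* A substitution symbol  alpha : n -> k  is given by a (finite, hence
   extensional) function  {1..n} -> {1..k}, encoded 0-based as
   {ffun 'I_n -> 'I_k}. *)
Record msalg := MSAlg {
  ms_sort :> nat -> Type;
  ms_zero : forall n, ms_sort n;
  ms_one : forall n, ms_sort n;
  ms_join : forall n, ms_sort n -> ms_sort n -> ms_sort n;
  ms_meet : forall n, ms_sort n -> ms_sort n -> ms_sort n;
  ms_subst : forall n k, {ffun 'I_n -> 'I_k} -> ms_sort n -> ms_sort k;
  ms_ex : forall n, ms_sort n.+1 -> ms_sort n
}.

Arguments ms_zero {L} n : rename.
Arguments ms_one {L} n : rename.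
Arguments ms_join {L n} : rename.
Arguments ms_meet {L n} : rename.
Arguments ms_subst {L n k} : rename.
Arguments ms_ex {L n} : rename.

Section Defs.
Variable L : msalg.

Definition ms_le n (x y : L n) : Prop := x = ms_meet x y.

Definition cyl_fun n : {ffun 'I_n -> 'I_n.+1} := [ffun i => widen_ord (leqnSn n) i].
Definition cyl n (u : L n) : L n.+1 := ms_subst (cyl_fun n) u.

Definition comp_fun n k m (beta : {ffun 'I_k -> 'I_m}) (alpha : {ffun 'I_n -> 'I_k})
  : {ffun 'I_n -> 'I_m} := [ffun i => beta (alpha i)].

Fixpoint ex_iter (n m : nat) : L (n + m) -> L m :=
  match n return L (n + m) -> L m with
  | 0 => fun x => x
  | n'.+1 => fun x => @ex_iter n' m (ms_ex (n := n' + m) x)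
  end.

Definition ax1 : Prop := forall n, forall x y z : L n,
  ms_join x (ms_join y z) = ms_join (ms_join x y) z /\
  ms_meet x (ms_meet y z) = ms_meet (ms_meet x y) z /\
  ms_join x y = ms_join y x /\
  ms_meet x y = ms_meet y x /\
  ms_join x (ms_meet x y) = x /\
  ms_meet x (ms_join x y) = x /\
  ms_meet x (ms_join y z) = ms_join (ms_meet x y) (ms_meet x z) /\
  ms_join x (@ms_zero L n) = x /\
  ms_meet x (@ms_one L n) = x.

Definition ax2 : Prop := forall n k (alpha : {ffun 'I_n -> 'I_k}),
  [/\ ms_subst alpha (@ms_zero L n) = @ms_zero L k,
      ms_subst alpha (@ms_one L n) = @ms_one L k,
      forall x y : L n, ms_subst alpha (ms_join x y) = ms_join (ms_subst alpha x) (ms_subst alpha y)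
    & forall x y : L n, ms_subst alpha (ms_meet x y) = ms_meet (ms_subst alpha x) (ms_subst alpha y)].

Definition ax3 : Prop := forall n k m (alpha : {ffun 'I_n -> 'I_k}) (beta : {ffun 'I_k -> 'I_m})
  (r : L n), ms_subst (comp_fun beta alpha) r = ms_subst beta (ms_subst alpha r).

Definition ax7 : Prop := forall n,
  ms_ex (@ms_zero L n.+1) = @ms_zero L n /\
  forall r s : L n.+1, ms_ex (ms_join r s) = ms_join (ms_ex r) (ms_ex s).

Definition ax8 : Prop := forall n (r : L n.+1), ms_le r (cyl (ms_ex r)).

Definition ax9 : Prop := forall n (r : L n.+1) (s : L n),
  ms_ex (ms_meet r (cyl s)) = ms_meet (ms_ex r) s.

(* (10): indices i = 1..n are encoded 0-based as i : 'I_n; the sort m+n is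
   the sort numbered n + m whose first m variables are the "old" ones and
   whose variable number m+i (1-based) is 0-based position m + i. *)
Definition ax10 : Prop :=
  forall (n m : nat) (k : 'I_n -> nat)
    (alpha : forall i, {ffun 'I_(k i) -> 'I_m})
    (beta : forall i, {ffun 'I_(k i).+1 -> 'I_(n + m)})
    (r : forall i, L (k i).+1),
    (forall i (j : 'I_(k i)), val (beta i (widen_ord (leqnSn (k i)) j)) = val (alpha i j)) ->
    (forall i, val (beta i ord_max) = m + val i) ->
    @ex_iter n m (\big[ms_meet/@ms_one L (n + m)]_(i < n) ms_subst (beta i) (r i))
    = \big[ms_meet/@ms_one L m]_(i < n) ms_subst (alpha i) (ms_ex (r i)).

Definition ms_axioms : Prop := ax1 /\ ax2 /\ ax3 /\ ax7 /\ ax8 /\ ax9 /\ ax10.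

(* Structures for the relational language: an n-ary relation symbol for
   each element of sort n.  n-tuples are finite functions 'I_n -> M. *)
Record mstruct := MStruct {
  st_carrier :> Type;
  st_rel : forall n, L n -> {ffun 'I_n -> st_carrier} -> Prop
}.

Definition snoc (M : Type) n (x : {ffun 'I_n -> M}) (y : M) : {ffun 'I_n.+1 -> M} :=
  [ffun i => match unlift ord_max i with Some j => x j | None => y end].

Definition tuple_subst (M : Type) n k (alpha : {ffun 'I_n -> 'I_k}) (x : {ffun 'I_k -> M})
  : {ffun 'I_n -> M} := [ffun i => x (alpha i)].

Definition almost_morphic (M : mstruct) : Prop :=
  (forall n (x : {ffun 'I_n -> M}), ~ st_rel (@ms_zero L n) x) /\
      (forall n (x : {ffun 'I_n -> M}), st_rel (@ms_one L n) x) /\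
      (forall n (r s : L n) (x : {ffun 'I_n -> M}),
        st_rel (ms_join r s) x <-> st_rel r x \/ st_rel s x) /\
      (forall n (r s : L n) (x : {ffun 'I_n -> M}),
        st_rel (ms_meet r s) x <-> st_rel r x /\ st_rel s x) /\
      (forall n k (alpha : {ffun 'I_n -> 'I_k}) (r : L n) (x : {ffun 'I_k -> M}),
        st_rel (ms_subst alpha r) x <-> st_rel r (tuple_subst alpha x)) /\
      (forall n (r : L n.+1) (x : {ffun 'I_n -> M}) (y : M),
        st_rel r (snoc x y) -> st_rel (ms_ex r) x).

Definition prime_filter n (G : L n -> Prop) : Prop :=
  [/\ exists x, ~ G x,
      exists x, G x,
      forall x y, G x -> ms_le x y -> G y,
      forall x y, G x -> G y -> G (ms_meet x y)
    & forall x y, G (ms_join x y) -> G x \/ G y].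

Definition substructure (M1 M2 : mstruct) (e : M1 -> M2) : Prop :=
  injective e /\
  forall n (r : L n) (a : {ffun 'I_n -> M1}),
    st_rel r a <-> st_rel r [ffun i => e (a i)].

Definition has_witnesses (M1 M2 : mstruct) (e : M1 -> M2) : Prop :=
  forall n (a : {ffun 'I_n -> M1}) (G : L n.+1 -> Prop),
    prime_filter G ->
    (forall u : L n, G (cyl u) <-> st_rel u a) ->
    exists b : M2, forall r, G r -> st_rel r (snoc [ffun i => e (a i)] b).

End Defs.

From mathcomp Require Import all_boot.
From mathcomp Require Import boolp classical_sets.
From Stdlib Require Import Classical.

(* Adjoin a new element w for every tuple a of M1 and prime filter G with c^-1(G) = p(a),
   and consider the diagram of M1 together with the facts r(a, w) for r in G.  Any fact
   about M1 derivable from finitely many of these already holds in M1: eliminating the new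
   elements with the projections of axiom (10) leaves facts (exists r)(a) for r in G, which
   hold since c(exists r) is in G by axiom (8).  By Zorn's lemma this conservative set of
   facts grows to a maximal conservative one, which is prime and closed under the rules of
   the almost morphic conditions, hence the diagram of the required extension M2. *)

Set Implicit Arguments. Unset Strict Implicit. Unset Printing Implicit Defensive.
Local Open Scope classical_set_scope.

Definition lshift_fun k1 k2 : {ffun 'I_k1 -> 'I_(k1 + k2)} := [ffun i => lshift k2 i].
Definition rshift_fun k1 k2 : {ffun 'I_k2 -> 'I_(k1 + k2)} := [ffun i => rshift k1 i].

Lemma widen_lift k (j : 'I_k) : widen_ord (leqnSn k) j = lift ord_max j.
Proof. by apply: val_inj; rewrite /= /bump leqNgt ltn_ord. Qed.

Section Tuples.
Variable Y : Type.

Lemma tuple_substE n k (a : {ffun 'I_n -> 'I_k}) (x : {ffun 'I_k -> Y}) i :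
  tuple_subst a x i = x (a i).
Proof. by rewrite ffunE. Qed.
Lemma tuple_subst_comp n k m (a : {ffun 'I_n -> 'I_k}) (b : {ffun 'I_k -> 'I_m})
    (x : {ffun 'I_m -> Y}) :
  tuple_subst a (tuple_subst b x) = tuple_subst (comp_fun b a) x.
Proof. by apply/ffunP=> i; rewrite !ffunE. Qed.
Lemma tuple_subst_inj q n (u : {ffun 'I_q -> Y}) (a b : {ffun 'I_n -> 'I_q}) :
  injective u -> tuple_subst a u = tuple_subst b u -> a = b.
Proof.
move=> u_inj Eab; apply/ffunP=> i; apply: u_inj.
by rewrite -!tuple_substE Eab.
Qed.

Lemma snoc_lift n (x : {ffun 'I_n -> Y}) y i : snoc x y (lift ord_max i) = x i.
Proof. by rewrite ffunE liftK. Qed.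
Lemma snoc_max n (x : {ffun 'I_n -> Y}) y : snoc x y ord_max = y.
Proof. by rewrite ffunE unlift_none. Qed.
Lemma tuple_subst_cyl_snoc n (x : {ffun 'I_n -> Y}) y :
  tuple_subst (cyl_fun n) (snoc x y) = x.
Proof. by apply/ffunP=> i; rewrite !ffunE widen_lift liftK. Qed.

Lemma injective_cover k (v : 'I_k -> Y) :
  exists q (u : 'I_q -> Y) (i : 'I_k -> 'I_q),
    [/\ injective u, forall j, u (i j) = v j & forall l, exists j, i j = l].
Proof.
elim: k v => [|k IH] v; first by exists 0, v, id; split=> // [[]|l]; [|exists l].
have [q [u [i [u_inj Eu i_onto]]]] := IH (fun j => v (lift ord_max j)).
have [[l El]|v_new] := classic (exists l, u l = v ord_max).
  exists q, u, (fun j => if unlift ord_max j is Some j' then i j' else l); split=> //.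
    by move=> j; case: (unliftP ord_max j) => [j' ->|->]; rewrite ?liftK ?unlift_none.
  by move=> l'; have [j Ej] := i_onto l'; exists (lift ord_max j); rewrite liftK.
exists q.+1, (fun l => if unlift ord_max l is Some l' then u l' else v ord_max),
  (fun j => if unlift ord_max j is Some j' then lift ord_max (i j') else ord_max); split.
- move=> a b.
  case: (unliftP ord_max a) => [a' ->|->]; case: (unliftP ord_max b) => [b' ->|->] //.
  + by move/u_inj ->.
  + by move=> E; case: v_new; exists a'.
  + by move=> E; case: v_new; exists b'.
- by move=> j; case: (unliftP ord_max j) => [j' ->|->]; rewrite ?liftK ?unlift_none.
- move=> l; case: (unliftP ord_max l) => [l' ->|->]; last by exists ord_max; rewrite unlift_none.
  by have [j <-] := i_onto l'; exists (lift ord_max j); rewrite liftK.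
Qed.

Lemma injective_cover2 k1 k2 (v1 : 'I_k1 -> Y) (v2 : 'I_k2 -> Y) :
  exists q (u : 'I_q -> Y) (i1 : 'I_k1 -> 'I_q) (i2 : 'I_k2 -> 'I_q),
    [/\ injective u, forall j, u (i1 j) = v1 j, forall j, u (i2 j) = v2 j
      & forall l, (exists j, i1 j = l) \/ (exists j, i2 j = l)].
Proof.
pose v j := match split j with inl j1 => v1 j1 | inr j2 => v2 j2 end.
have [q [u [i [u_inj Eu i_onto]]]] := injective_cover v.
exists q, u, (fun j => i (lshift k2 j)), (fun j => i (rshift k1 j)); split=> //.
- by move=> j; rewrite Eu /v (unsplitK (inl _ j)).
- by move=> j; rewrite Eu /v (unsplitK (inr _ j)).
- move=> l; have [j <-] := i_onto l; rewrite -(splitK j).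
  by case: (split j) => [j1|j2]; [left; exists j1|right; exists j2].
Qed.

Lemma tuple_cover2 k1 k2 (x1 : {ffun 'I_k1 -> Y}) (x2 : {ffun 'I_k2 -> Y}) :
  exists q (u : {ffun 'I_q -> Y}) (a1 : {ffun 'I_k1 -> 'I_q}) (a2 : {ffun 'I_k2 -> 'I_q}),
    [/\ injective u, tuple_subst a1 u = x1 & tuple_subst a2 u = x2].
Proof.
have [q [u [i1 [i2 [u_inj E1 E2 _]]]]] := injective_cover2 x1 x2.
exists q, [ffun l => u l], [ffun j => i1 j], [ffun j => i2 j]; split.
- by move=> a b; rewrite !ffunE => /u_inj.
- by apply/ffunP=> j; rewrite !ffunE.
- by apply/ffunP=> j; rewrite !ffunE.
Qed.

Lemma tuple_cover k (x : {ffun 'I_k -> Y}) :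
  exists q (u : {ffun 'I_q -> Y}) (a : {ffun 'I_k -> 'I_q}),
    injective u /\ tuple_subst a u = x.
Proof. by have [q [u [a [_ [u_inj Ea _]]]]] := tuple_cover2 x x; exists q, u, a. Qed.

Definition tuple_cat k1 k2 (x1 : {ffun 'I_k1 -> Y}) (x2 : {ffun 'I_k2 -> Y})
  : {ffun 'I_(k1 + k2) -> Y} :=
  [ffun i => match split i with inl j => x1 j | inr j => x2 j end].

Lemma tuple_cat_lshift k1 k2 (x1 : {ffun 'I_k1 -> Y}) (x2 : {ffun 'I_k2 -> Y}) :
  tuple_subst (lshift_fun k1 k2) (tuple_cat x1 x2) = x1.
Proof. by apply/ffunP=> i; rewrite !ffunE (unsplitK (inl _ i)). Qed.
Lemma tuple_cat_rshift k1 k2 (x1 : {ffun 'I_k1 -> Y}) (x2 : {ffun 'I_k2 -> Y}) :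
  tuple_subst (rshift_fun k1 k2) (tuple_cat x1 x2) = x2.
Proof. by apply/ffunP=> i; rewrite !ffunE (unsplitK (inr _ i)). Qed.

End Tuples.

Section Positions.
Variables p m : nat.

Definition old_pos (a : 'I_p) : 'I_(m + p) := cast_ord (addnC p m) (lshift m a).
Definition new_pos (b : 'I_m) : 'I_(m + p) := cast_ord (addnC p m) (rshift p b).
Definition pos_split (i : 'I_(m + p)) : 'I_p + 'I_m := split (cast_ord (esym (addnC p m)) i).

Lemma pos_split_old a : pos_split (old_pos a) = inl a.
Proof. by rewrite /pos_split /old_pos cast_ordK (unsplitK (inl _ a)). Qed.
Lemma pos_split_new b : pos_split (new_pos b) = inr b.
Proof. by rewrite /pos_split /new_pos cast_ordK (unsplitK (inr _ b)). Qed.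

Variant pos_spec : 'I_(m + p) -> Type :=
| PosOld a : pos_spec (old_pos a)
| PosNew b : pos_spec (new_pos b).

Lemma posP i : pos_spec i.
Proof.
rewrite -[i](cast_ordKV (addnC p m)) -(splitK (cast_ord _ i)).
by case: (split _) => [a|b]; constructor.
Qed.

Definition old_fun : {ffun 'I_p -> 'I_(m + p)} := [ffun a => old_pos a].

(* Old elements occupy the first [p] positions and the [m] witnesses the last [m]:
   the order of the variables eliminated by [ex_iter]. *)
Definition layout (A B : Type) (d : {ffun 'I_p -> A}) (w : 'I_m -> B)
  : {ffun 'I_(m + p) -> A + B} :=
  [ffun j => match pos_split j with inl a => inl (d a) | inr b => inr (w b) end].

Lemma layout_old A B (d : {ffun 'I_p -> A}) (w : 'I_m -> B) a : layout d w (old_pos a) = inl (d a).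
Proof. by rewrite ffunE pos_split_old. Qed.
Lemma layout_new A B (d : {ffun 'I_p -> A}) (w : 'I_m -> B) b : layout d w (new_pos b) = inr (w b).
Proof. by rewrite ffunE pos_split_new. Qed.

Lemma layout_inj A B (d : {ffun 'I_p -> A}) (w : 'I_m -> B) :
  injective d -> injective w -> injective (layout d w).
Proof.
move=> d_inj w_inj i j; case: (posP i) => [a|b]; case: (posP j) => [a'|b'];
  rewrite ?layout_old ?layout_new // => -[E]; congr (_ _); [exact: d_inj|exact: w_inj].
Qed.

Lemma layout_inl_factor A B k (d : {ffun 'I_p -> A}) (w : 'I_m -> B)
    (a : {ffun 'I_k -> 'I_(m + p)}) (c : {ffun 'I_k -> A}) :
  tuple_subst a (layout d w) = [ffun j => inl (c j)] ->
  exists a0, a = comp_fun old_fun a0 /\ tuple_subst a0 d = c.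
Proof.
move=> Ea.
have old j : exists a0, a j = old_pos a0 /\ d a0 = c j.
  have : layout d w (a j) = inl (c j) by rewrite -tuple_substE Ea ffunE.
  by case: (posP (a j)) => [a0|b]; rewrite ?layout_old ?layout_new // => -[<-]; exists a0.
have [f Ef] := fin_all_exists old.
by exists [ffun j => f j]; split; apply/ffunP=> j; rewrite !ffunE; case: (Ef j).
Qed.

End Positions.

Arguments old_pos {p} m a.
Arguments new_pos p {m} b.
Arguments old_fun : clear implicits.

Definition id_fun p : {ffun 'I_p -> 'I_p} := [ffun a => a].

Lemma tuple_subst_id (Y : Type) p (x : {ffun 'I_p -> Y}) : tuple_subst (id_fun p) x = x.
Proof. by apply/ffunP=> a; rewrite !ffunE. Qed.

Lemma old_fun0 p : old_fun p 0 = id_fun p.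
Proof. by apply/ffunP=> a; rewrite !ffunE; apply: val_inj. Qed.
Lemma old_funS p m : old_fun p m.+1 = comp_fun (cyl_fun (m + p)) (old_fun p m).
Proof. by apply/ffunP=> a; rewrite !ffunE; apply: val_inj. Qed.

Definition pos_map p1 m1 p m (o : 'I_p1 -> 'I_p) (n : 'I_m1 -> 'I_m)
  : {ffun 'I_(m1 + p1) -> 'I_(m + p)} :=
  [ffun j => match pos_split j with inl a => old_pos m (o a) | inr b => new_pos p (n b) end].

Section PosMap.
Variables (p1 m1 p m : nat) (o : {ffun 'I_p1 -> 'I_p}) (n : 'I_m1 -> 'I_m).

Lemma pos_map_old a : pos_map o n (old_pos m1 a) = old_pos m (o a).
Proof. by rewrite ffunE pos_split_old. Qed.
Lemma pos_map_new b : pos_map o n (new_pos p1 b) = new_pos p (n b).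
Proof. by rewrite ffunE pos_split_new. Qed.

Lemma pos_map_old_fun :
  comp_fun (pos_map o n) (old_fun p1 m1) = comp_fun (old_fun p m) o.
Proof. by apply/ffunP=> a; rewrite !ffunE pos_split_old. Qed.

Lemma tuple_subst_pos_map A B (d : {ffun 'I_p -> A}) (w : 'I_m -> B) (w1 : 'I_m1 -> B) :
  (forall j, w (n j) = w1 j) ->
  tuple_subst (pos_map o n) (layout d w) = layout (tuple_subst o d) w1.
Proof.
move=> Ew; apply/ffunP=> j; rewrite tuple_substE.
by case: (posP j) => [a|b];
  rewrite ?pos_map_old ?pos_map_new ?layout_old ?layout_new ?tuple_substE ?Ew.
Qed.

End PosMap.

Lemma layout_old_fun A B p m (d : {ffun 'I_p -> A}) (w : 'I_m -> B) :
  tuple_subst (old_fun p m) (layout d w) = [ffun a => inl (d a)].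
Proof. by apply/ffunP=> a; rewrite tuple_substE [old_fun _ _ a]ffunE layout_old ffunE. Qed.

Definition ord0_rect (P : 'I_0 -> Type) (i : 'I_0) : P i :=
  False_rect (P i) (Bool.diff_false_true (etrans (esym (ltn0 i)) (ltn_ord i))).

Section ExistentialAlgebra.
Variable L : msalg.
Hypothesis HL1 : ax1 L.
Hypothesis HL2 : ax2 L.
Hypothesis HL3 : ax3 L.
Hypothesis HL7 : ax7 L.
Hypothesis HL8 : ax8 L.
Hypothesis HL9 : ax9 L.
Hypothesis HL10 : ax10 L.

Lemma ms_meetC n (x y : L n) : ms_meet x y = ms_meet y x.
Proof. by have [_ [_ [_ [? _]]]] := HL1 x y x. Qed.
Lemma ms_joinC n (x y : L n) : ms_join x y = ms_join y x.
Proof. by have [_ [_ [? _]]] := HL1 x y x. Qed.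
Lemma ms_meetA n (x y z : L n) : ms_meet x (ms_meet y z) = ms_meet (ms_meet x y) z.
Proof. by have [_ [? _]] := HL1 x y z. Qed.
Lemma ms_joinA n (x y z : L n) : ms_join x (ms_join y z) = ms_join (ms_join x y) z.
Proof. by have [? _] := HL1 x y z. Qed.
Lemma ms_joinKI n (x y : L n) : ms_join x (ms_meet x y) = x.
Proof. by have [_ [_ [_ [_ [? _]]]]] := HL1 x y x. Qed.
Lemma ms_meetKU n (x y : L n) : ms_meet x (ms_join x y) = x.
Proof. by have [_ [_ [_ [_ [_ [? _]]]]]] := HL1 x y x. Qed.
Lemma ms_meetUr n (x y z : L n) :
  ms_meet x (ms_join y z) = ms_join (ms_meet x y) (ms_meet x z).
Proof. by have [_ [_ [_ [_ [_ [_ [? _]]]]]]] := HL1 x y z. Qed.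
Lemma ms_meetx1 n (x : L n) : ms_meet x (ms_one n) = x.
Proof. by have [_ [_ [_ [_ [_ [_ [_ [_ ?]]]]]]]] := HL1 x x x. Qed.
Lemma ms_meetxx n (x : L n) : ms_meet x x = x.
Proof. by rewrite -{2}(ms_joinKI x x) ms_meetKU. Qed.

Lemma ms_le_refl n (x : L n) : ms_le x x.
Proof. by rewrite /ms_le ms_meetxx. Qed.
Lemma ms_le_trans n (y x z : L n) : ms_le x y -> ms_le y z -> ms_le x z.
Proof. by rewrite /ms_le => Exy Eyz; rewrite Exy -ms_meetA -Eyz -Exy. Qed.
Lemma ms_leEjoin n (x y : L n) : ms_le x y <-> ms_join x y = y.
Proof.
split; rewrite /ms_le => E; first by rewrite E ms_joinC ms_meetC ms_joinKI.
by rewrite -E ms_meetKU.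
Qed.
Lemma ms_leIl n (x y : L n) : ms_le (ms_meet x y) x.
Proof. by rewrite /ms_le [ms_meet _ x]ms_meetC ms_meetA ms_meetxx. Qed.
Lemma ms_leIr n (x y : L n) : ms_le (ms_meet x y) y.
Proof. by rewrite ms_meetC; apply: ms_leIl. Qed.
Lemma ms_lexI n (x y z : L n) : ms_le x y -> ms_le x z -> ms_le x (ms_meet y z).
Proof. by rewrite /ms_le => Exy Exz; rewrite ms_meetA -Exy -Exz. Qed.
Lemma ms_lex1 n (x : L n) : ms_le x (ms_one n).
Proof. by rewrite /ms_le ms_meetx1. Qed.
Lemma ms_leUl n (x y : L n) : ms_le x (ms_join x y).
Proof. by rewrite /ms_le ms_meetKU. Qed.
Lemma ms_leUr n (x y : L n) : ms_le y (ms_join x y).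
Proof. by rewrite ms_joinC; apply: ms_leUl. Qed.
Lemma ms_leUx n (x y z : L n) : ms_le x z -> ms_le y z -> ms_le (ms_join x y) z.
Proof.
by move=> /ms_leEjoin Exz /ms_leEjoin Eyz; apply/ms_leEjoin; rewrite -ms_joinA Eyz Exz.
Qed.
Lemma ms_leI2 n (x y z t : L n) : ms_le x z -> ms_le y t -> ms_le (ms_meet x y) (ms_meet z t).
Proof.
move=> lexz leyt; apply: ms_lexI; first exact: ms_le_trans (ms_leIl _ _) lexz.
exact: ms_le_trans (ms_leIr _ _) leyt.
Qed.
Lemma ms_leU2 n (x y z t : L n) : ms_le x z -> ms_le y t -> ms_le (ms_join x y) (ms_join z t).
Proof.
move=> lexz leyt; apply: ms_leUx; first exact: ms_le_trans lexz (ms_leUl _ _).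
exact: ms_le_trans leyt (ms_leUr _ _).
Qed.

Lemma ms_substI n k (a : {ffun 'I_n -> 'I_k}) (x y : L n) :
  ms_subst a (ms_meet x y) = ms_meet (ms_subst a x) (ms_subst a y).
Proof. by case: (HL2 a). Qed.
Lemma ms_substU n k (a : {ffun 'I_n -> 'I_k}) (x y : L n) :
  ms_subst a (ms_join x y) = ms_join (ms_subst a x) (ms_subst a y).
Proof. by case: (HL2 a). Qed.
Lemma ms_subst1 n k (a : {ffun 'I_n -> 'I_k}) : ms_subst a (ms_one n) = ms_one k :> L k.
Proof. by case: (HL2 a). Qed.
Lemma ms_subst0 n k (a : {ffun 'I_n -> 'I_k}) : ms_subst a (ms_zero n) = ms_zero k :> L k.
Proof. by case: (HL2 a). Qed.
Lemma ms_subst_le n k (a : {ffun 'I_n -> 'I_k}) (x y : L n) :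
  ms_le x y -> ms_le (ms_subst a x) (ms_subst a y).
Proof. by rewrite /ms_le => E; rewrite -ms_substI -E. Qed.

Lemma ms_subst_entail q k n (i : {ffun 'I_k -> 'I_q}) (f : L k) (b : {ffun 'I_n -> 'I_k})
    r m (a : {ffun 'I_m -> 'I_k}) t :
  ms_le (ms_meet f (ms_subst b r)) (ms_subst a t) ->
  ms_le (ms_meet (ms_subst i f) (ms_subst (comp_fun i b) r)) (ms_subst (comp_fun i a) t).
Proof. by move=> le_t; rewrite !HL3 -ms_substI; apply: ms_subst_le. Qed.

Lemma ms_ex_le n (x y : L n.+1) : ms_le x y -> ms_le (ms_ex x) (ms_ex y).
Proof.
by move=> /ms_leEjoin E; apply/ms_leEjoin; have [_ exU] := HL7 n; rewrite -exU E.
Qed.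
Lemma ex_iter_le n m (x y : L (n + m)) : ms_le x y -> ms_le (ex_iter x) (ex_iter y).
Proof. by elim: n m x y => [|n IH] m x y //= lexy; apply/IH/ms_ex_le. Qed.
Lemma ms_ex_cyl_le n (v : L n) : ms_le (ms_ex (cyl v)) v.
Proof. by rewrite -[cyl v]ms_meetx1 ms_meetC HL9; apply: ms_leIr. Qed.

Lemma ex_iter_meet_old m p (s : L p) (h : L (m + p)) :
  ex_iter (ms_meet (ms_subst (old_fun p m) s) h)
  = ms_meet (ms_subst (id_fun p) s) (ex_iter h).
Proof.
elim: m h => [|m IH] h /=; first by rewrite old_fun0.
by rewrite old_funS HL3 ms_meetC HL9 ms_meetC IH.
Qed.

Lemma ex_iter_old_le m p (v : L p) :
  ms_le (ex_iter (ms_subst (old_fun p m) v)) (ms_subst (id_fun p) v).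
Proof.
elim: m => [|m IH] /=; first by rewrite old_fun0; apply: ms_le_refl.
apply: ms_le_trans IH; apply: ex_iter_le; rewrite old_funS HL3; exact: ms_ex_cyl_le.
Qed.

Lemma ms_lex_big k n (x : L k) (F : 'I_n -> L k) :
  (forall i, ms_le x (F i)) -> ms_le x (\big[ms_meet/ms_one k]_(i < n) F i).
Proof.
elim: n F => [|n IH] F leF; first by rewrite big_ord0; apply: ms_lex1.
by rewrite big_ord_recl; apply: ms_lexI; [|apply: IH].
Qed.
Lemma ms_big_le k n (F : 'I_n -> L k) i : ms_le (\big[ms_meet/ms_one k]_(j < n) F j) (F i).
Proof.
elim: n F i => [|n IH] F i; first by case: i.
rewrite big_ord_recl; case: (unliftP ord0 i) => [j ->|->]; last exact: ms_leIl.
exact: ms_le_trans (ms_leIr _ _) (IH _ _).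
Qed.
Lemma ms_subst_big k q n (a : {ffun 'I_k -> 'I_q}) (F : 'I_n -> L k) :
  ms_subst a (\big[ms_meet/ms_one k]_(i < n) F i)
  = \big[ms_meet/ms_one q]_(i < n) ms_subst a (F i).
Proof.
elim: n F => [|n IH] F; first by rewrite !big_ord0 ms_subst1.
by rewrite !big_ord_recl ms_substI IH.
Qed.

Section AlmostMorphic.
Variable M : mstruct L.
Hypothesis HM : almost_morphic M.

Lemma rel1 k (x : {ffun 'I_k -> M}) : st_rel (ms_one k) x.
Proof. by case: HM => _ [relT _]. Qed.
Lemma rel0 k (x : {ffun 'I_k -> M}) : ~ st_rel (ms_zero k) x.
Proof. by case: HM => relF _. Qed.
Lemma relU k (r s : L k) (x : {ffun 'I_k -> M}) :
  st_rel (ms_join r s) x <-> st_rel r x \/ st_rel s x.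
Proof. by case: HM => _ [_ [relU _]]. Qed.
Lemma relI k (r s : L k) (x : {ffun 'I_k -> M}) :
  st_rel (ms_meet r s) x <-> st_rel r x /\ st_rel s x.
Proof. by case: HM => _ [_ [_ [relI _]]]. Qed.
Lemma rel_subst n k (a : {ffun 'I_n -> 'I_k}) r (x : {ffun 'I_k -> M}) :
  st_rel (ms_subst a r) x <-> st_rel r (tuple_subst a x).
Proof. by case: HM => _ [_ [_ [_ [relS _]]]]. Qed.
Lemma rel_le k (r s : L k) (x : {ffun 'I_k -> M}) : st_rel r x -> ms_le r s -> st_rel s x.
Proof. by move=> rx E; rewrite E in rx; case/relI: rx. Qed.
Lemma rel_big k n (F : 'I_n -> L k) (x : {ffun 'I_k -> M}) :
  (forall i, st_rel (F i) x) -> st_rel (\big[ms_meet/ms_one k]_(i < n) F i) x.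
Proof.
elim: n F => [|n IH] F relF; first by rewrite big_ord0; apply: rel1.
by rewrite big_ord_recl; apply/relI; split; [|apply: IH].
Qed.

End AlmostMorphic.

Section Closure.
Variable X : Type.

(* A theory is a set of positive atomic facts [r(x)] about tuples [x] from [X]. *)
Definition theory := forall k, {ffun 'I_k -> X} -> L k -> Prop.

Definition subtheory (T T' : theory) := forall k x r, T k x r -> T' k x r.
Definition theoryU (T T' : theory) : theory := fun k x r => T k x r \/ T' k x r.

Inductive theory1 n (x : {ffun 'I_n -> X}) (r : L n) : theory :=
  Theory1 : theory1 x r x r.

(* Closure under the rules valid in every model of the almost morphic conditions. *)
Inductive closure (T : theory) : theory :=
| cl_base k x r : T k x r -> closure T x r
| cl_one k x : closure T x (ms_one k)
| cl_meet k x r s : closure T x r -> closure T x s -> @closure T k x (ms_meet r s)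
| cl_le k x r s : closure T x r -> ms_le r s -> @closure T k x s
| cl_subst n k (a : {ffun 'I_n -> 'I_k}) x r :
    closure T (tuple_subst a x) r -> closure T x (ms_subst a r)
| cl_unsubst n k (a : {ffun 'I_n -> 'I_k}) x r :
    closure T x (ms_subst a r) -> closure T (tuple_subst a x) r.

Lemma closure_mono T T' : subtheory T T' -> subtheory (closure T) (closure T').
Proof.
move=> TT' k x r; elim=> {k x r}; [by move=> k x r /TT'; apply: cl_base|..].
- exact: cl_one.
- by move=> *; apply: cl_meet.
- by move=> k x r s _ IH le_rs; apply: cl_le IH le_rs.
- by move=> *; apply: cl_subst.
- by move=> *; apply: cl_unsubst.
Qed.

Lemma closure_idem T : subtheory (closure (closure T)) (closure T).
Proof.
move=> k x r; elim=> {k x r} //.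
- exact: cl_one.
- by move=> *; apply: cl_meet.
- by move=> k x r s _ IH le_rs; apply: cl_le IH le_rs.
- by move=> *; apply: cl_subst.
- by move=> *; apply: cl_unsubst.
Qed.

(* [t(z)] follows from [T] and the hypothesis [r(x)]: over a common injective tuple
   [u], some fact [f] of [T] together with [r] entails [t]. *)
Definition implied (T : theory) n (x : {ffun 'I_n -> X}) (r : L n) : theory :=
  fun k z t => exists q (u : {ffun 'I_q -> X}) (a : {ffun 'I_k -> 'I_q})
    (b : {ffun 'I_n -> 'I_q}) f,
  [/\ injective u, tuple_subst a u = z, tuple_subst b u = x, T q u f &
      ms_le (ms_meet f (ms_subst b r)) (ms_subst a t)].

Section Deduction.
Variables (T : theory) (n : nat) (x : {ffun 'I_n -> X}) (r : L n).
Hypothesis T_closed : subtheory (closure T) T.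

Lemma implied_merge s k1 k2 (z1 : {ffun 'I_k1 -> X}) (z2 : {ffun 'I_k2 -> X}) t1 t2 :
  implied T x r z1 t1 -> implied T x s z2 t2 ->
  exists q (u : {ffun 'I_q -> X}) (a1 : {ffun 'I_k1 -> 'I_q}) (a2 : {ffun 'I_k2 -> 'I_q})
    (b : {ffun 'I_n -> 'I_q}) f,
  [/\ injective u, tuple_subst a1 u = z1, tuple_subst a2 u = z2 & tuple_subst b u = x] /\
  [/\ T u f, ms_le (ms_meet f (ms_subst b r)) (ms_subst a1 t1)
    & ms_le (ms_meet f (ms_subst b s)) (ms_subst a2 t2)].
Proof.
move=> [q1 [u1 [a1 [b1 [f1 [u1_inj Ea1 Eb1 Tf1 le1]]]]]].
move=> [q2 [u2 [a2 [b2 [f2 [u2_inj Ea2 Eb2 Tf2 le2]]]]]].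
have [q [u [i1 [i2 [u_inj Ei1 Ei2]]]]] := tuple_cover2 u1 u2.
have Eb : comp_fun i1 b1 = comp_fun i2 b2.
  by apply: (tuple_subst_inj u_inj); rewrite -!tuple_subst_comp Ei1 Ei2 Eb1 Eb2.
exists q, u, (comp_fun i1 a1), (comp_fun i2 a2), (comp_fun i1 b1).
exists (ms_meet (ms_subst i1 f1) (ms_subst i2 f2)).
split; split; rewrite -?tuple_subst_comp ?Ei1 ?Ei2 //.
- by apply: T_closed; apply: cl_meet; apply: cl_subst; [rewrite Ei1|rewrite Ei2]; apply: cl_base.
- apply: ms_le_trans (ms_subst_entail i1 le1).
  by apply: ms_leI2; [apply: ms_leIl|apply: ms_le_refl].
- rewrite Eb; apply: ms_le_trans (ms_subst_entail i2 le2).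
  by apply: ms_leI2; [apply: ms_leIr|apply: ms_le_refl].
Qed.

Lemma deduction : subtheory (closure (theoryU T (theory1 x r))) (implied T x r).
Proof.
move=> k z t; elim=> {k z t}.
- move=> k z t [Tt|[]].
    have [q [u [a [b [u_inj Ea Eb]]]]] := tuple_cover2 z x.
    exists q, u, a, b, (ms_subst a t); split=> //; last exact: ms_leIl.
    by apply: T_closed; apply: cl_subst; rewrite Ea; apply: cl_base.
  have [q [u [b [u_inj Eb]]]] := tuple_cover x.
  exists q, u, b, b, (ms_one q); split=> //; last exact: ms_leIr.
  by apply: T_closed; apply: cl_one.
- move=> k z; have [q [u [a [b [u_inj Ea Eb]]]]] := tuple_cover2 z x.
  exists q, u, a, b, (ms_one q); split=> //; first by apply: T_closed; apply: cl_one.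
  by rewrite ms_subst1; apply: ms_lex1.
- move=> k z t1 t2 _ imp1 _ imp2.
  have [q [u [a1 [a2 [b [f [[u_inj Ea1 Ea2 Eb] [Tf le1 le2]]]]]]]] := implied_merge imp1 imp2.
  have Ea : a1 = a2 by apply: (tuple_subst_inj u_inj); rewrite Ea1 Ea2.
  exists q, u, a1, b, f; split=> //.
  by rewrite ms_substI; apply: ms_lexI; rewrite // Ea.
- move=> k z t s _ [q [u [a [b [f [u_inj Ea Eb Tf le_t]]]]]] le_ts.
  exists q, u, a, b, f; split=> //; exact: ms_le_trans le_t (ms_subst_le _ le_ts).
- move=> n' k g z t _ [q [u [a [b [f [u_inj Ea Eb Tf le_t]]]]]].
  have [q' [u' [i [c [u'_inj Ei Ec]]]]] := tuple_cover2 u z.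
  have Eci : comp_fun c g = comp_fun i a.
    by apply: (tuple_subst_inj u'_inj); rewrite -!tuple_subst_comp Ei Ec Ea.
  exists q', u', c, (comp_fun i b), (ms_subst i f); split=> //.
  + by rewrite -tuple_subst_comp Ei.
  + by apply: T_closed; apply: cl_subst; rewrite Ei; apply: cl_base.
  + by rewrite -HL3 Eci; apply: ms_subst_entail.
- move=> n' k g z t _ [q [u [a [b [f [u_inj Ea Eb Tf le_t]]]]]].
  exists q, u, (comp_fun a g), b, f; split=> //; first by rewrite -tuple_subst_comp Ea.
  by rewrite HL3.
Qed.

Lemma implied_join s k1 k2 (z1 : {ffun 'I_k1 -> X}) (z2 : {ffun 'I_k2 -> X}) t1 t2 :
  T x (ms_join r s) -> implied T x r z1 t1 -> implied T x s z2 t2 ->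
  T (tuple_cat z1 z2)
    (ms_join (ms_subst (lshift_fun k1 k2) t1) (ms_subst (rshift_fun k1 k2) t2)).
Proof.
move=> Trs imp1 imp2.
have [q [u [a1 [a2 [b [f [[u_inj Ea1 Ea2 Eb] [Tf le1 le2]]]]]]]] := implied_merge imp1 imp2.
pose rho : {ffun 'I_(k1 + k2) -> 'I_q} :=
  [ffun j => match split j with inl j1 => a1 j1 | inr j2 => a2 j2 end].
have Erho : tuple_subst rho u = tuple_cat z1 z2.
  by apply/ffunP=> j; rewrite !ffunE -Ea1 -Ea2; case: (split j) => j'; rewrite ffunE.
have rho_l : comp_fun rho (lshift_fun k1 k2) = a1.
  by apply/ffunP=> j; rewrite !ffunE (unsplitK (inl _ j)).
have rho_r : comp_fun rho (rshift_fun k1 k2) = a2.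
  by apply/ffunP=> j; rewrite !ffunE (unsplitK (inr _ j)).
rewrite -Erho; apply: T_closed; apply: cl_unsubst.
apply: cl_le (_ : closure T u (ms_meet f (ms_subst b (ms_join r s)))) _.
  by apply: cl_meet; [apply: cl_base|apply: cl_subst; rewrite Eb; apply: cl_base].
rewrite [ms_subst rho _]ms_substU -!HL3 rho_l rho_r ms_substU ms_meetUr.
exact: ms_leU2.
Qed.

End Deduction.
End Closure.

Section PrimeExtension.
Variables (M1 : mstruct L) (X : Type) (e : M1 -> X).
Hypothesis HM1 : almost_morphic M1.

Definition emb k (c : {ffun 'I_k -> M1}) : {ffun 'I_k -> X} := [ffun i => e (c i)].

Lemma emb_tuple_cat k1 k2 (c1 : {ffun 'I_k1 -> M1}) (c2 : {ffun 'I_k2 -> M1}) :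
  emb (tuple_cat c1 c2) = tuple_cat (emb c1) (emb c2).
Proof. by apply/ffunP=> i; rewrite !ffunE; case: (split i) => j; rewrite ffunE. Qed.

Definition conservative (T : theory X) :=
  forall k (c : {ffun 'I_k -> M1}) t, closure T (emb c) t -> st_rel t c.

Definition prime_theory (T : theory X) :=
  forall k (x : {ffun 'I_k -> X}) r s, T k x (ms_join r s) -> T k x r \/ T k x s.

Definition fact := {k : nat & ({ffun 'I_k -> X} * L k)%type}.
Definition theory_of (A : set fact) : theory X := fun k x r => A (existT _ k (x, r)).

Variable base : theory X.

Lemma closure_chain (F : set (set fact)) : total_on F subset ->
  forall k (x : {ffun 'I_k -> X}) r,
  closure (theoryU base (theory_of (\bigcup_(A in F) A))) x r ->
  closure base x r \/ exists2 A, F A & closure (theoryU base (theory_of A)) x r.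
Proof.
move=> F_total k x r; elim=> {k x r}.
- move=> k x r [base_r|[A FA Ar]]; first by left; apply: cl_base.
  by right; exists A => //; apply: cl_base; right.
- by move=> k x; left; apply: cl_one.
- move=> k x r s _ [r_base|[A FA rA]] _ [s_base|[B FB sB]].
  + by left; apply: cl_meet.
  + right; exists B => //; apply: cl_meet => //.
    by apply: closure_mono r_base => ? ? ? ?; left.
  + right; exists A => //; apply: cl_meet => //.
    by apply: closure_mono s_base => ? ? ? ?; left.
  + have [AB|BA] := F_total _ _ FA FB.
      right; exists B => //; apply: cl_meet => //.
      by apply: closure_mono rA => ? ? ? [?|?]; [left|right; apply: AB].
    right; exists A => //; apply: cl_meet => //.
    by apply: closure_mono sB => ? ? ? [?|?]; [left|right; apply: BA].
- move=> k x r s _ [r_base|[A FA rA]] le_rs; first by left; apply: cl_le le_rs.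
  by right; exists A => //; apply: cl_le le_rs.
- move=> n k a x r _ [r_base|[A FA rA]]; first by left; apply: cl_subst.
  by right; exists A => //; apply: cl_subst.
- move=> n k a x r _ [r_base|[A FA rA]]; first by left; apply: cl_unsubst.
  by right; exists A => //; apply: cl_unsubst.
Qed.

Lemma theory_of_setU1 A k (x : {ffun 'I_k -> X}) r :
  subtheory (theory_of (A `|` [set existT _ k (x, r)])) (theoryU (theory_of A) (theory1 x r)).
Proof.
move=> k' z t [Az|E]; [by left|right].
suff /(_ _ E) : forall phi : fact, phi = existT _ k (x, r) ->
    match phi with existT _ (z', t') => theory1 x r z' t' end by [].
by move=> _ ->; constructor.
Qed.

Section Maximal.
Variable A : set fact.
Hypothesis A_cons : conservative (theoryU base (theory_of A)).
Hypothesis A_max : forall B, A `<` B -> ~ conservative (theoryU base (theory_of B)).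

Local Notation T := (theory_of A).

Lemma maximal_mem k (x : {ffun 'I_k -> X}) r :
  conservative (theoryU base (theoryU T (theory1 x r))) -> T x r.
Proof.
move=> cons_xr; apply: NNPP => T'xr.
apply: (A_max (B := A `|` [set existT _ k (x, r)])).
  split; first by move=> ? ?; left.
  by move/(_ (existT _ k (x, r))) => /(_ (or_intror erefl)).
move=> k' c t cl_t; apply: cons_xr; apply: closure_mono cl_t => k'' z s.
by case=> [base_s|/theory_of_setU1 s_xr]; [left|right].
Qed.

Lemma maximal_closed : subtheory (closure (theoryU base T)) T.
Proof.
move=> k x r cl_r; apply: maximal_mem => k' c t cl_t; apply: A_cons; apply: closure_idem.
by apply: closure_mono cl_t => k'' z s [base_s|[Ts|[]]] //; apply: cl_base; [left|right].
Qed.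

Lemma maximal_base : subtheory base T.
Proof. by move=> k x r base_r; apply: maximal_closed; apply: cl_base; left. Qed.

Lemma maximal_closure : subtheory (closure T) T.
Proof. by move=> k x r cl_r; apply: maximal_closed; apply: closure_mono cl_r => ? ? ? ?; right. Qed.

Lemma maximal_conservative : conservative T.
Proof. by move=> k c t cl_t; apply: A_cons; apply: closure_mono cl_t => ? ? ? ?; right. Qed.

(* Otherwise adding [r(x)] to [T] would keep it conservative, by [deduction]. *)
Lemma maximal_counterexample k (x : {ffun 'I_k -> X}) r : ~ T x r ->
  exists k' (c : {ffun 'I_k' -> M1}) t, implied T x r (emb c) t /\ ~ st_rel t c.
Proof.
move=> T'xr; apply: NNPP => no_cex; apply/T'xr/maximal_mem => k' c t cl_t.
apply: NNPP => t'c; apply: no_cex; exists k', c, t; split=> //.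
apply: deduction; first exact: maximal_closure.
apply: closure_mono cl_t => k'' z s [/maximal_base Ts|s_T]; by [left|].
Qed.

Lemma maximal_prime : prime_theory T.
Proof.
move=> k x r s Trs; apply: NNPP => T'rs.
have [k1 [c1 [t1 [imp1 t1'c1]]]] := maximal_counterexample (fun Tr => T'rs (or_introl Tr)).
have [k2 [c2 [t2 [imp2 t2'c2]]]] := maximal_counterexample (fun Ts => T'rs (or_intror Ts)).
have := implied_join maximal_closure Trs imp1 imp2.
rewrite -emb_tuple_cat => /cl_base /maximal_conservative /(relU HM1) [].
  by move/(rel_subst HM1); rewrite tuple_cat_lshift.
by move/(rel_subst HM1); rewrite tuple_cat_rshift.
Qed.

End Maximal.

Lemma conservative_prime_extension : conservative base ->
  exists T, [/\ subtheory base T, subtheory (closure T) T, prime_theory T & conservative T].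
Proof.
move=> base_cons.
have [|A [A_cons A_max]] := @Zorn_bigcup fact (fun A => conservative (theoryU base (theory_of A))).
  move=> F F_cons F_total k c t /(closure_chain F_total) [|[A FA]]; first exact: base_cons.
  exact: F_cons.
exists (theory_of A); split.
- exact: maximal_base.
- exact: maximal_closure.
- exact: maximal_prime.
- exact: maximal_conservative.
Qed.

End PrimeExtension.

Section TermModel.
Variables (M1 : mstruct L) (X : Type) (e : M1 -> X) (T : theory X).
Hypothesis HM1 : almost_morphic M1.
Hypothesis e_inj : injective e.
Hypothesis T_diagram : forall k (c : {ffun 'I_k -> M1}) r, st_rel r c -> T (emb e c) r.
Hypothesis T_closed : subtheory (closure T) T.
Hypothesis T_prime : prime_theory T.
Hypothesis T_cons : conservative e T.

Definition term_model : mstruct L := MStruct (fun k r (x : {ffun 'I_k -> X}) => T x r).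

Lemma term_model_substructure : substructure (M2 := term_model) e.
Proof.
split=> // n r c; split; first exact: T_diagram.
by move=> /cl_base; apply: T_cons.
Qed.

Lemma term_model_almost_morphic : almost_morphic term_model.
Proof.
have cl_T k (x : {ffun 'I_k -> X}) r : closure T x r -> T x r by apply: T_closed.
split; [|split; [|split; [|split; [|split]]]] => /=.
- move=> n x Tx0; pose a : {ffun 'I_0 -> 'I_n} := [ffun i => widen_ord (leq0n n) i].
  have : closure T (tuple_subst a x) (ms_zero 0).
    by apply: cl_unsubst; rewrite ms_subst0; apply: cl_base.
  have -> : tuple_subst a x = emb e (ffun0 (card_ord 0)) by apply/ffunP => -[].
  by move/T_cons; apply: rel0.
- by move=> n x; apply: cl_T; apply: cl_one.
- move=> n r s x; split; first exact: T_prime.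
  by case=> Tx; apply: cl_T; apply: cl_le (cl_base Tx) _; [apply: ms_leUl|apply: ms_leUr].
- move=> n r s x; split; last by case=> Tr Ts; apply: cl_T; apply: cl_meet; apply: cl_base.
  by move=> Trs; split; apply: cl_T; apply: cl_le (cl_base Trs) _; [apply: ms_leIl|apply: ms_leIr].
- move=> n k a r x; split=> Tr; apply: cl_T; [apply: cl_unsubst|apply: cl_subst]; exact: cl_base.
- move=> n r x y Tr; rewrite -(tuple_subst_cyl_snoc x y); apply: cl_T; apply: cl_unsubst.
  exact: cl_le (cl_base Tr) (HL8 r).
Qed.

End TermModel.

Section Witnesses.
Variable M1 : mstruct L.
Hypothesis HM1 : almost_morphic M1.

Record request := Request {
  rq_arity : nat;
  rq_tuple : {ffun 'I_rq_arity -> M1};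
  rq_filter : L rq_arity.+1 -> Prop;
  rq_prime : prime_filter rq_filter;
  rq_cyl : forall u, rq_filter (cyl u) <-> st_rel u rq_tuple }.
Arguments rq_filter : clear implicits.

Lemma rq_filter_le (w : request) r s : rq_filter w r -> ms_le r s -> rq_filter w s.
Proof. by case: (rq_prime w) => _ _ up _ _; apply: up. Qed.
Lemma rq_filterI (w : request) r s : rq_filter w r -> rq_filter w s -> rq_filter w (ms_meet r s).
Proof. by case: (rq_prime w) => _ _ _ meet _; apply: meet. Qed.
Lemma rq_filter1 (w : request) : rq_filter w (ms_one _).
Proof. by case: (rq_prime w) => _ [r wr] _ _ _; apply: rq_filter_le wr (ms_lex1 r). Qed.
Lemma rq_filter_ex (w : request) r : rq_filter w r -> st_rel (ms_ex r) (rq_tuple w).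
Proof. by move=> wr; apply/rq_cyl; apply: rq_filter_le wr (HL8 r). Qed.

Local Notation ext := (M1 + request)%type.

Inductive witness_base : theory ext :=
| wb_diagram k (c : {ffun 'I_k -> M1}) r : st_rel r c -> witness_base (emb inl c) r
| wb_witness (w : request) r :
    rq_filter w r -> witness_base (snoc (emb inl (rq_tuple w)) (inr w)) r.

(* A finite fragment of [witness_base]: distinct elements [cf_elt] of [M1] and distinct
   requests [cf_req], laid out by [layout]; for the [i]-th request, a fact [cf_fact i] of
   its filter placed at positions [cf_pos i], and a fact [cf_diag] true of [cf_elt]. *)
Record config := Config {
  cf_old : nat;
  cf_new : nat;
  cf_elt : {ffun 'I_cf_old -> M1};
  cf_req : 'I_cf_new -> request;
  cf_pos : forall i, {ffun 'I_(rq_arity (cf_req i)).+1 -> 'I_(cf_new + cf_old)};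
  cf_fact : forall i, L (rq_arity (cf_req i)).+1;
  cf_diag : L cf_old }.
Arguments cf_req : clear implicits.
Arguments cf_pos : clear implicits.
Arguments cf_fact : clear implicits.

Definition cf_tuple D : {ffun 'I_(cf_new D + cf_old D) -> ext} := layout (cf_elt D) (cf_req D).

Definition premise D : L (cf_new D + cf_old D) :=
  ms_meet (ms_subst (old_fun _ _) (cf_diag D))
    (\big[ms_meet/ms_one _]_(i < cf_new D) ms_subst (cf_pos D i) (cf_fact D i)).

Definition valid D :=
  [/\ injective (cf_elt D), injective (cf_req D),
      forall i, tuple_subst (cf_pos D i) (cf_tuple D)
                = snoc (emb inl (rq_tuple (cf_req D i))) (inr (cf_req D i)),
      forall i, rq_filter (cf_req D i) (cf_fact D i)
    & st_rel (cf_diag D) (cf_elt D)].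

Definition supported : theory ext := fun k z t =>
  exists D, valid D /\ exists a : {ffun 'I_k -> 'I_(cf_new D + cf_old D)},
    tuple_subst a (cf_tuple D) = z /\ ms_le (premise D) (ms_subst a t).

(* Eliminating the witnesses turns each [cf_fact i] into [ms_ex (cf_fact i)], which holds
   of the parameters of the request; this is where axiom (10) is used. *)
Lemma premise_holds D : valid D -> st_rel (ex_iter (premise D)) (cf_elt D).
Proof.
case=> _ req_inj posE factE diagE.
have params i : exists A, comp_fun (cf_pos D i) (cyl_fun _) = comp_fun (old_fun _ _) A
    /\ tuple_subst A (cf_elt D) = rq_tuple (cf_req D i).
  apply: (layout_inl_factor (w := cf_req D)).
  by rewrite -tuple_subst_comp posE tuple_subst_cyl_snoc.
pose A i := sval (cid (params i)).
have [posA eltA] : (forall i, comp_fun (cf_pos D i) (cyl_fun _) = comp_fun (old_fun _ _) (A i))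
    /\ forall i, tuple_subst (A i) (cf_elt D) = rq_tuple (cf_req D i).
  by split=> i; case: (svalP (cid (params i))).
have pos_param i j : val (cf_pos D i (widen_ord (leqnSn _) j)) = val (A i j).
  by have := congr1 (fun f : {ffun _ -> _} => val (f j)) (posA i); rewrite !ffunE.
have pos_last i : val (cf_pos D i ord_max) = cf_old D + i.
  have : cf_tuple D (cf_pos D i ord_max) = inr (cf_req D i).
    by rewrite -tuple_substE posE snoc_max.
  case: (posP (cf_pos D i ord_max)) => [a|b]; rewrite /cf_tuple ?layout_old ?layout_new //.
  by case=> /req_inj ->.
rewrite /premise ex_iter_meet_old (HL10 _ pos_param pos_last); apply/(relI HM1); split.
  by apply/(rel_subst HM1); rewrite tuple_subst_id.
by apply: (rel_big HM1) => i; apply/(rel_subst HM1); rewrite eltA; apply: rq_filter_ex.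
Qed.

Lemma supported_sound k (c : {ffun 'I_k -> M1}) t : supported (emb inl c) t -> st_rel t c.
Proof.
case=> D [vD [a [Ea le_t]]].
have [a0 [Ea0 <-]] := layout_inl_factor Ea; rewrite {}Ea0 in le_t.
apply/(rel_subst HM1); rewrite -[cf_elt D]tuple_subst_id -(rel_subst HM1).
apply: (rel_le HM1 (premise_holds vD)).
by apply: ms_le_trans (ex_iter_old_le _ _); apply: ex_iter_le; rewrite -HL3.
Qed.

Lemma request_fact_transport (x y : request) q (V : {ffun 'I_q -> ext})
    (Bx : {ffun 'I_(rq_arity x).+1 -> 'I_q}) (By : {ffun 'I_(rq_arity y).+1 -> 'I_q}) gx :
  x = y -> injective V ->
  tuple_subst Bx V = snoc (emb inl (rq_tuple x)) (inr x) ->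
  tuple_subst By V = snoc (emb inl (rq_tuple y)) (inr y) ->
  rq_filter x gx -> exists gy, rq_filter y gy /\ ms_subst By gy = ms_subst Bx gx.
Proof.
move=> Exy; case: y / Exy By => By V_inj EBx EBy xgx; exists gx; split=> //.
by congr ms_subst; apply: (tuple_subst_inj V_inj); rewrite EBx EBy.
Qed.

Lemma premise_le_pos_map D D1 (o : {ffun 'I_(cf_old D1) -> 'I_(cf_old D)})
    (n : 'I_(cf_new D1) -> 'I_(cf_new D)) :
  ms_le (cf_diag D) (ms_subst o (cf_diag D1)) ->
  (forall j, ms_le (ms_subst (cf_pos D (n j)) (cf_fact D (n j)))
                   (ms_subst (comp_fun (pos_map o n) (cf_pos D1 j)) (cf_fact D1 j))) ->
  ms_le (premise D) (ms_subst (pos_map o n) (premise D1)).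
Proof.
move=> le_diag le_fact; rewrite /premise ms_substI -HL3 pos_map_old_fun HL3 ms_subst_big.
apply: ms_leI2; first exact: ms_subst_le.
apply: ms_lex_big => j; rewrite -HL3; exact: ms_le_trans (ms_big_le _ (n j)) (le_fact j).
Qed.

Section Merge.
Variables (p m : nat) (d : {ffun 'I_p -> M1}) (w : 'I_m -> request).
Hypotheses (d_inj : injective d) (w_inj : injective w).

Local Notation U := (layout d w).

Lemma merge_tuple D (o : {ffun 'I_(cf_old D) -> 'I_p}) (n : 'I_(cf_new D) -> 'I_m) :
  tuple_subst o d = cf_elt D -> (forall j, w (n j) = cf_req D j) ->
  tuple_subst (pos_map o n) U = cf_tuple D.
Proof. by move=> Eo En; rewrite (tuple_subst_pos_map _ _ En) Eo. Qed.

Lemma merge_fact D (o : {ffun 'I_(cf_old D) -> 'I_p}) (n : 'I_(cf_new D) -> 'I_m) :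
  valid D -> tuple_subst o d = cf_elt D -> (forall j, w (n j) = cf_req D j) ->
  forall i (B : {ffun 'I_(rq_arity (w i)).+1 -> 'I_(m + p)}),
  tuple_subst B U = snoc (emb inl (rq_tuple (w i))) (inr (w i)) ->
  exists g, rq_filter (w i) g /\ forall j, n j = i ->
    ms_le (ms_subst B g) (ms_subst (comp_fun (pos_map o n) (cf_pos D j)) (cf_fact D j)).
Proof.
case=> _ req_inj posE factE _ Eo En i B EB.
have [[j nj]|n'i] := classic (exists j, n j = i); last first.
  by exists (ms_one _); split=> [|j nj]; [apply: rq_filter1|case: n'i; exists j].
have EB' : tuple_subst (comp_fun (pos_map o n) (cf_pos D j)) U
           = snoc (emb inl (rq_tuple (cf_req D j))) (inr (cf_req D j)).
  by rewrite -tuple_subst_comp (merge_tuple Eo En) posE.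
have Eji : cf_req D j = w i by rewrite -En nj.
have [g [wg Eg]] := request_fact_transport Eji (layout_inj d_inj w_inj) EB' EB (factE j).
exists g; split=> // j' nj'.
have -> : j' = j by apply: req_inj; rewrite -!En nj nj'.
by rewrite Eg; apply: ms_le_refl.
Qed.

End Merge.

Lemma cf_tuple_inj D : valid D -> injective (cf_tuple D).
Proof. by case=> elt_inj req_inj _ _ _; apply: layout_inj. Qed.

Lemma config_merge D1 D2 : valid D1 -> valid D2 ->
  exists D, valid D /\
  exists (i1 : {ffun 'I_(cf_new D1 + cf_old D1) -> 'I_(cf_new D + cf_old D)})
         (i2 : {ffun 'I_(cf_new D2 + cf_old D2) -> 'I_(cf_new D + cf_old D)}),
  [/\ tuple_subst i1 (cf_tuple D) = cf_tuple D1, tuple_subst i2 (cf_tuple D) = cf_tuple D2 &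
      ms_le (premise D) (ms_meet (ms_subst i1 (premise D1)) (ms_subst i2 (premise D2)))].
Proof.
move=> vD1 vD2; have [_ _ posE1 _ diag1] := vD1; have [_ _ posE2 _ diag2] := vD2.
have [p [d [o1 [o2 [d_inj Eo1 Eo2]]]]] := tuple_cover2 (cf_elt D1) (cf_elt D2).
have [m [w [n1 [n2 [w_inj En1 En2 n_onto]]]]] := injective_cover2 (cf_req D1) (cf_req D2).
have Ei1 := merge_tuple Eo1 En1; have Ei2 := merge_tuple Eo2 En2.
have posE i : exists B, tuple_subst B (layout d w) = snoc (emb inl (rq_tuple (w i))) (inr (w i)).
  have [[j <-]|[j <-]] := n_onto i.
    by rewrite En1; exists (comp_fun (pos_map o1 n1) (cf_pos D1 j)); rewrite -tuple_subst_comp Ei1.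
  by rewrite En2; exists (comp_fun (pos_map o2 n2) (cf_pos D2 j)); rewrite -tuple_subst_comp Ei2.
pose B i := sval (cid (posE i)); have EB i : _ = _ := svalP (cid (posE i)).
have factE i : exists g, rq_filter (w i) g /\
    (forall j, n1 j = i -> ms_le (ms_subst (B i) g)
       (ms_subst (comp_fun (pos_map o1 n1) (cf_pos D1 j)) (cf_fact D1 j))) /\
    (forall j, n2 j = i -> ms_le (ms_subst (B i) g)
       (ms_subst (comp_fun (pos_map o2 n2) (cf_pos D2 j)) (cf_fact D2 j))).
  have [g1 [wg1 le1]] := merge_fact d_inj w_inj vD1 Eo1 En1 (EB i).
  have [g2 [wg2 le2]] := merge_fact d_inj w_inj vD2 Eo2 En2 (EB i).
  exists (ms_meet g1 g2); split; first exact: rq_filterI.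
  by split=> j nj; [apply: ms_le_trans (le1 j nj)|apply: ms_le_trans (le2 j nj)];
    apply: ms_subst_le; [apply: ms_leIl|apply: ms_leIr].
pose g i := sval (cid (factE i)); have gE i : rq_filter (w i) (g i) /\ _ := svalP (cid (factE i)).
exists (@Config p m d w B g (ms_meet (ms_subst o1 (cf_diag D1)) (ms_subst o2 (cf_diag D2)))).
split.
  split=> //=; first by move=> i; case: (gE i).
  by apply/(relI HM1); split; apply/(rel_subst HM1); rewrite ?Eo1 ?Eo2.
exists (pos_map o1 n1), (pos_map o2 n2); split=> //.
apply: ms_lexI; apply: premise_le_pos_map => /=; do ?[exact: ms_leIl|exact: ms_leIr].
  by move=> j; case: (gE (n1 j)) => _ [+ _]; apply.
by move=> j; case: (gE (n2 j)) => _ [_ +]; apply.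
Qed.

Lemma diagram_supported k (c : {ffun 'I_k -> M1}) r : st_rel r c -> supported (emb inl c) r.
Proof.
move=> rc; have [p [d [a [d_inj Ea]]]] := tuple_cover c.
exists (@Config p 0 d (ord0_rect _) (ord0_rect _) (ord0_rect _) (ms_subst a r)); split.
  by split=> //=; [case..|apply/(rel_subst HM1); rewrite Ea].
exists (comp_fun (old_fun p 0) a); split.
  by rewrite -tuple_subst_comp layout_old_fun -Ea; apply/ffunP=> j; rewrite !ffunE.
by rewrite HL3; apply: ms_leIl.
Qed.

Lemma witness_supported (w : request) r :
  rq_filter w r -> supported (snoc (emb inl (rq_tuple w)) (inr w)) r.
Proof.
move=> wr; have [p [d [a [d_inj Ea]]]] := tuple_cover (rq_tuple w).
pose B : {ffun 'I_(rq_arity w).+1 -> 'I_(1 + p)} :=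
  [ffun j => if unlift ord_max j is Some j' then old_pos 1 (a j') else new_pos p ord0].
have EB : tuple_subst B (layout d (fun _ : 'I_1 => w)) = snoc (emb inl (rq_tuple w)) (inr w).
  apply/ffunP=> j; rewrite tuple_substE [B _]ffunE; case: (unliftP ord_max j) => [j' ->|->].
    by rewrite layout_old snoc_lift ffunE -Ea tuple_substE.
  by rewrite layout_new snoc_max.
exists (@Config p 1 d (fun _ => w) (fun _ => B) (fun _ => r) (ms_one p)); split.
  by split=> //= [i j _|]; [rewrite !ord1|apply: rel1].
exists B; split=> //.
exact: ms_le_trans (ms_leIr _ _) (ms_big_le (fun _ : 'I_1 => ms_subst B r) ord0).
Qed.

Lemma supported_elt (x : M1 + request) : exists D, valid D /\ exists j, cf_tuple D j = x.
Proof.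
case: x => [c0|w].
  have [D [vD [a [Ea _]]]] := diagram_supported (rel1 HM1 [ffun _ : 'I_1 => c0]).
  by exists D; split=> //; exists (a ord0); rewrite -tuple_substE Ea !ffunE.
have [D [vD [a [Ea _]]]] := witness_supported (rq_filter1 w).
by exists D; split=> //; exists (a ord_max); rewrite -tuple_substE Ea snoc_max.
Qed.

Lemma supported_tuple k (z : {ffun 'I_k -> M1 + request}) :
  exists D, valid D /\ exists a : {ffun 'I_k -> 'I_(cf_new D + cf_old D)},
    tuple_subst a (cf_tuple D) = z.
Proof.
elim: k z => [|k IH] z.
  have [D [vD [a [_ _]]]] := diagram_supported (rel1 HM1 (ffun0 (card_ord 0))).
  by exists D; split=> //; exists a; apply/ffunP => -[].
have [D1 [vD1 [a1 Ea1]]] := IH [ffun j => z (lift ord_max j)].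
have [D2 [vD2 [j2 Ej2]]] := supported_elt (z ord_max).
have [D [vD [i1 [i2 [Ei1 Ei2 _]]]]] := config_merge vD1 vD2.
exists D; split=> //.
pose a := [ffun j => if unlift ord_max j is Some j' then i1 (a1 j') else i2 j2].
exists a; apply/ffunP=> j; rewrite tuple_substE [a j]ffunE.
case: (unliftP ord_max j) => [j' ->|->].
  by rewrite -tuple_substE Ei1 -tuple_substE Ea1 ffunE.
by rewrite -tuple_substE Ei2.
Qed.

Lemma supported_one k (z : {ffun 'I_k -> M1 + request}) : supported z (ms_one k).
Proof.
have [D [vD [a Ea]]] := supported_tuple z.
by exists D; split=> //; exists a; split=> //; rewrite ms_subst1; apply: ms_lex1.
Qed.

Lemma supported_meet k (z : {ffun 'I_k -> M1 + request}) t1 t2 :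
  supported z t1 -> supported z t2 -> supported z (ms_meet t1 t2).
Proof.
move=> [D1 [vD1 [a1 [Ea1 le1]]]] [D2 [vD2 [a2 [Ea2 le2]]]].
have [D [vD [i1 [i2 [Ei1 Ei2 le_D]]]]] := config_merge vD1 vD2.
have Ea : comp_fun i1 a1 = comp_fun i2 a2.
  by apply: (tuple_subst_inj (cf_tuple_inj vD)); rewrite -!tuple_subst_comp Ei1 Ei2 Ea1 Ea2.
exists D; split=> //; exists (comp_fun i1 a1); split; first by rewrite -tuple_subst_comp Ei1.
apply: ms_le_trans le_D _; rewrite ms_substI; apply: ms_leI2.
  by rewrite HL3; apply: ms_subst_le.
by rewrite Ea HL3; apply: ms_subst_le.
Qed.

Lemma supported_le k (z : {ffun 'I_k -> M1 + request}) t s :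
  supported z t -> ms_le t s -> supported z s.
Proof.
move=> [D [vD [a [Ea le_t]]]] le_ts; exists D; split=> //; exists a; split=> //.
exact: ms_le_trans le_t (ms_subst_le _ le_ts).
Qed.

Lemma supported_subst n k (g : {ffun 'I_n -> 'I_k}) (z : {ffun 'I_k -> M1 + request}) t :
  supported (tuple_subst g z) t -> supported z (ms_subst g t).
Proof.
move=> [D1 [vD1 [a1 [Ea1 le1]]]].
have [D2 [vD2 [a2 Ea2]]] := supported_tuple z.
have [D [vD [i1 [i2 [Ei1 Ei2 le_D]]]]] := config_merge vD1 vD2.
have Ea : comp_fun (comp_fun i2 a2) g = comp_fun i1 a1.
  by apply: (tuple_subst_inj (cf_tuple_inj vD)); rewrite -!tuple_subst_comp Ei1 Ei2 Ea2 Ea1.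
exists D; split=> //; exists (comp_fun i2 a2); split; first by rewrite -tuple_subst_comp Ei2.
rewrite -HL3 Ea HL3; apply: ms_le_trans le_D _; apply: ms_le_trans (ms_leIl _ _) _.
exact: ms_subst_le.
Qed.

Lemma supported_unsubst n k (g : {ffun 'I_n -> 'I_k}) (z : {ffun 'I_k -> M1 + request}) t :
  supported z (ms_subst g t) -> supported (tuple_subst g z) t.
Proof.
move=> [D [vD [a [Ea le_t]]]]; exists D; split=> //; exists (comp_fun a g).
by rewrite -tuple_subst_comp Ea HL3.
Qed.

Lemma closure_supported : subtheory (closure witness_base) supported.
Proof.
move=> k z t; elim=> {k z t}.
- by move=> k z t [k' c r rc|w r wr]; [apply: diagram_supported|apply: witness_supported].
- exact: supported_one.
- by move=> k z t1 t2 _ + _; apply: supported_meet.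
- by move=> k z t s _ + le_ts; move/supported_le; apply.
- by move=> n k g z t _; apply: supported_subst.
- by move=> n k g z t _; apply: supported_unsubst.
Qed.

Lemma witness_base_conservative : conservative inl witness_base.
Proof. by move=> k c t /closure_supported; apply: supported_sound. Qed.

End Witnesses.
End ExistentialAlgebra.

Theorem lemma4p13 (L : msalg) (HL : ms_axioms L) (M1 : mstruct L)
  (M1_ne : inhabited M1) (HM1 : almost_morphic M1) :
  exists (M2 : mstruct L) (e : M1 -> M2),
    [/\ substructure e, almost_morphic M2 & has_witnesses e].
Proof.
have [HL1 [HL2 [HL3 [HL7 [HL8 [HL9 HL10]]]]]] := HL.
have base_cons := witness_base_conservative HL1 HL2 HL3 HL7 HL8 HL9 HL10 HM1.
have [T [baseT T_closed T_prime T_cons]] := conservative_prime_extension HL1 HL2 HL3 HM1 base_cons.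
have T_diagram k (c : {ffun 'I_k -> M1}) r : st_rel r c -> T _ (emb inl c) r.
  by move=> rc; apply/baseT/wb_diagram.
exists (term_model T), inl; split.
- exact: term_model_substructure inl_inj T_diagram T_cons.
- exact (term_model_almost_morphic HL1 HL2 HL8 HM1 T_closed T_prime T_cons).
- move=> n a G G_prime G_cyl; exists (inr (Request G_prime G_cyl)) => r Gr.
  by apply/baseT/(wb_witness (w := Request G_prime G_cyl)).
Qed.
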